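(* Let $\mathcal{P}$ be a declassification policy with public view $\Delta^{\mathcal{P}}_P,\Gamma^{\mathcal{P}}_P$ and environment $\rho_{\mathcal{P}}$ as in the context. If $\langle\gamma_1,\gamma_2\rangle\in I[\mathcal{P}]$, then $\langle\gamma_1,\gamma_2\rangle\in\mathcal{V}[\Gamma^{\mathcal{P}}_P]_{\rho_{\mathcal{P}}}$.
   Context: Language: simply typed call-by-value lambda calculus with types $\tau::=\mathbf{int}\mid\alpha\mid\tau_1\times\tau_2\mid\tau_1\to\tau_2$, values $v::=n\mid\langle v,v\rangle\mid\lambda x:\tau.e$, terms $e::=x\mid v\mid\langle e,e\rangle\mid\pi_ie\mid e_1e_2$ (plus terminating primitive arithmetic operators on $\mathbf{int}$), standard typing and call-by-value reduction $\to^*$. Logical relation for type substitutions $\delta_1,\delta_2$ and $\rho\in\mathrm{Rel}(\delta_1,\delta_2)$ ($\mathrm{dom}\rho=\mathrm{dom}\delta_i$, $\rho(\alpha)$ a relation between closed values of types $\delta_1(\alpha)$, $\delta_2(\alpha)$): $\langle n,n\rangle\in\mathcal{V}[\mathbf{int}]_\rho$; pairs componentwise; $\langle v_1,v_2\rangle\in\mathcal{V}[\tau_1\to\tau_2]_\rho$ iff for all $\langle v_1',v_2'\rangle\in\mathcal{V}[\tau_1]_\rho$, $\langle v_1v_1',v_2v_2'\rangle\in\mathcal{E}[\tau_2]_\rho$; $\mathcal{V}[\alpha]_\rho=\rho(\alpha)$; $\langle e_1,e_2\rangle\in\mathcal{E}[\tau]_\rho$ iff $\vdash e_i:\delta_i(\tau)$,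 $e_i\to^*v_i$, $\langle v_1,v_2\rangle\in\mathcal{V}[\tau]_\rho$. A term substitution $\gamma$ respects $\Gamma$ if $\mathrm{dom}\gamma=\mathrm{dom}\Gamma$ and $\vdash\gamma(x):\Gamma(x)$. $\langle\gamma_1,\gamma_2\rangle\in\mathcal{V}[\Gamma]_\rho$ iff $\gamma_1$ respects $\delta_1(\Gamma)$, $\gamma_2$ respects $\delta_2(\Gamma)$, and $\langle\gamma_1(x),\gamma_2(x)\rangle\in\mathcal{V}[\Gamma(x)]_\rho$ for all $x\in\mathrm{dom}\Gamma$ (here $\delta(\Gamma)$ applies $\delta$ to every type in $\Gamma$). Policy $\mathcal{P}=\langle V_{\mathcal{P}},F_{\mathcal{P}}\rangle$: finite set $V_{\mathcal{P}}$ of confidential inputs, partial map $F_{\mathcal{P}}$ to closed declassification functions $f=\lambda x:\mathbf{int}.e$ of type $\mathbf{int}\to\tau_f$ ($\tau_f$ closed); $V_\top=V_{\mathcal{P}}\setminus\mathrm{dom}F_{\mathcal{P}}$. Public view: $\Delta^{\mathcal{P}}_P=\{\alpha_x\mid x\in V_\top\}\cup\{\alpha_f\mid F_{\mathcal{P}}(x)=f\}$, $\Gamma^{\mathcal{P}}_P=\{x:\alpha_x\mid x\in V_\top\}\cup\{x:\alpha_f,\,x_f:\alpha_f\to\tau_f\mid F_{\mathcal{P}}(x)=f\}$ (fresh distinct variables). $\delta_{\mathcal{P}}$ maps all type variables of $\Delta^{\mathcal{P}}_P$ to $\mathbf{int}$. Indistinguishability for $\Delta^{\mathcal{P}}_P\vdash\tau$: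 $\langle n,n\rangle\in I[\mathbf{int}]$; pairs componentwise; $\langle v_1,v_2\rangle\in I[\tau_1\to\tau_2]$ iff for all $\langle v_1',v_2'\rangle\in I[\tau_1]$, $\langle v_1v_1',v_2v_2'\rangle\in I[\tau_2]^{ev}$; $\langle v_1,v_2\rangle\in I[\alpha_x]$ iff $\vdash v_1,v_2:\mathbf{int}$; $\langle v_1,v_2\rangle\in I[\alpha_f]$ iff $\vdash v_1,v_2:\mathbf{int}$ and $\langle f v_1,f v_2\rangle\in I[\tau_f]^{ev}$; $\langle e_1,e_2\rangle\in I[\tau]^{ev}$ iff $\vdash e_1,e_2:\delta_{\mathcal{P}}(\tau)$, $e_i\to^*v_i$, $\langle v_1,v_2\rangle\in I[\tau]$. $\rho_{\mathcal{P}}(\alpha_x)=I[\alpha_x]$, $\rho_{\mathcal{P}}(\alpha_f)=I[\alpha_f]$ (taken with $\delta_1=\delta_2=\delta_{\mathcal{P}}$). $\langle\gamma_1,\gamma_2\rangle\in I[\mathcal{P}]$ iff both $\gamma_i$ respect $\delta_{\mathcal{P}}(\Gamma^{\mathcal{P}}_P)$, $\gamma_1(x_f)=\gamma_2(x_f)=f$ for each $x_f\in\mathrm{dom}\Gamma^{\mathcal{P}}_P$, and $\langle\gamma_1(x),\gamma_2(x)\rangle\in I[\Gamma^{\mathcal{P}}_P(x)]$ for every other $x\in\mathrm{dom}\Gamma^{\mathcal{P}}_P$. *)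

From Stdlib Require Import ZArith List Relations.
Import ListNotations.
Set Implicit Arguments.

(* Type variables: [AX x] is alpha_x, [AF x] is alpha_f for F_P(x) = f. *)
Inductive tyvar : Type := AX (x : nat) | AF (x : nat).

Inductive ty : Type :=
| TInt : ty
| TVar : tyvar -> ty
| TProd : ty -> ty -> ty
| TArr : ty -> ty -> ty.

(* Term variables: [VIn x] are ordinary variables (confidential inputs are
   VIn x for x in V_P); [VDecl x] is the fresh variable x_f associated with
   input x (distinct from every VIn). *)
Inductive var : Type := VIn (x : nat) | VDecl (x : nat).

Definition var_eqb (a b : var) : bool :=
  match a, b with
  | VIn x, VIn y => Nat.eqb x y
  | VDecl x, VDecl y => Nat.eqb x y
  | _, _ => false
  end.

Inductive tm : Type :=
| tVar : var -> tm
| tConst : Z -> tm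
| tPair : tm -> tm -> tm
| tFst : tm -> tm
| tSnd : tm -> tm
| tApp : tm -> tm -> tm
| tLam : var -> ty -> tm -> tm
| tOp : (Z -> Z -> Z) -> tm -> tm -> tm.

Inductive is_value : tm -> Prop :=
| v_const : forall n, is_value (tConst n)
| v_pair : forall v1 v2, is_value v1 -> is_value v2 -> is_value (tPair v1 v2)
| v_lam : forall x t e, is_value (tLam x t e).

(** Substitution of a (closed) value for a variable. *)
Fixpoint subst (x : var) (s : tm) (e : tm) : tm :=
  match e with
  | tVar y => if var_eqb x y then s else e
  | tConst n => e
  | tPair e1 e2 => tPair (subst x s e1) (subst x s e2)
  | tFst e1 => tFst (subst x s e1)
  | tSnd e1 => tSnd (subst x s e1)
  | tApp e1 e2 => tApp (subst x s e1) (subst x s e2)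
  | tLam y t b => tLam y t (if var_eqb x y then b else subst x s b)
  | tOp f e1 e2 => tOp f (subst x s e1) (subst x s e2)
  end.

Inductive step : tm -> tm -> Prop :=
| st_beta : forall x t b v, is_value v -> step (tApp (tLam x t b) v) (subst x v b)
| st_app1 : forall e1 e1' e2, step e1 e1' -> step (tApp e1 e2) (tApp e1' e2)
| st_app2 : forall v1 e2 e2', is_value v1 -> step e2 e2' -> step (tApp v1 e2) (tApp v1 e2')
| st_pair1 : forall e1 e1' e2, step e1 e1' -> step (tPair e1 e2) (tPair e1' e2)
| st_pair2 : forall v1 e2 e2', is_value v1 -> step e2 e2' -> step (tPair v1 e2) (tPair v1 e2')
| st_fst : forall e e', step e e' -> step (tFst e) (tFst e')
| st_snd : forall e e', step e e' -> step (tSnd e) (tSnd e')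
| st_fstv : forall v1 v2, is_value v1 -> is_value v2 -> step (tFst (tPair v1 v2)) v1
| st_sndv : forall v1 v2, is_value v1 -> is_value v2 -> step (tSnd (tPair v1 v2)) v2
| st_op1 : forall f e1 e1' e2, step e1 e1' -> step (tOp f e1 e2) (tOp f e1' e2)
| st_op2 : forall f v1 e2 e2', is_value v1 -> step e2 e2' -> step (tOp f v1 e2) (tOp f v1 e2')
| st_opv : forall f n1 n2, step (tOp f (tConst n1) (tConst n2)) (tConst (f n1 n2)).

Definition multistep : tm -> tm -> Prop := clos_refl_trans tm step.

Definition ctx := var -> option ty.
Definition empty_ctx : ctx := fun _ => None.
Definition update (G : ctx) (x : var) (t : ty) : ctx :=
  fun y => if var_eqb x y then Some t else G y.

Inductive has_type : ctx -> tm -> ty -> Prop :=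
| T_var : forall G x t, G x = Some t -> has_type G (tVar x) t
| T_const : forall G n, has_type G (tConst n) TInt
| T_pair : forall G e1 e2 t1 t2, has_type G e1 t1 -> has_type G e2 t2 ->
    has_type G (tPair e1 e2) (TProd t1 t2)
| T_fst : forall G e t1 t2, has_type G e (TProd t1 t2) -> has_type G (tFst e) t1
| T_snd : forall G e t1 t2, has_type G e (TProd t1 t2) -> has_type G (tSnd e) t2
| T_app : forall G e1 e2 t1 t2, has_type G e1 (TArr t1 t2) -> has_type G e2 t1 ->
    has_type G (tApp e1 e2) t2
| T_lam : forall G x t1 t2 b, has_type (update G x t1) b t2 ->
    has_type G (tLam x t1 b) (TArr t1 t2)
| T_op : forall G f e1 e2, has_type G e1 TInt -> has_type G e2 TInt ->
    has_type G (tOp f e1 e2) TInt.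

Definition typed (e : tm) (t : ty) : Prop := has_type empty_ctx e t.

Definition tysubst := tyvar -> ty.
Fixpoint tsubst (d : tysubst) (t : ty) : ty :=
  match t with
  | TInt => TInt
  | TVar a => d a
  | TProd t1 t2 => TProd (tsubst d t1) (tsubst d t2)
  | TArr t1 t2 => TArr (tsubst d t1) (tsubst d t2)
  end.

Definition ctx_subst (d : tysubst) (G : ctx) : ctx :=
  fun x => option_map (tsubst d) (G x).

Fixpoint ty_closed (t : ty) : Prop :=
  match t with
  | TInt => True
  | TVar _ => False
  | TProd t1 t2 => ty_closed t1 /\ ty_closed t2
  | TArr t1 t2 => ty_closed t1 /\ ty_closed t2
  end.

Definition rel := tm -> tm -> Prop.

Definition Erel (d1 d2 : tysubst) (t : ty) (Vt : rel) : rel :=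
  fun e1 e2 => typed e1 (tsubst d1 t) /\ typed e2 (tsubst d2 t) /\
    exists v1 v2, multistep e1 v1 /\ is_value v1 /\ multistep e2 v2 /\
                  is_value v2 /\ Vt v1 v2.

Fixpoint Vrel (d1 d2 : tysubst) (rho : tyvar -> rel) (t : ty) : rel :=
  match t with
  | TInt => fun v1 v2 => exists n, v1 = tConst n /\ v2 = tConst n
  | TVar a => rho a
  | TProd t1 t2 => fun v1 v2 => exists a1 b1 a2 b2,
      v1 = tPair a1 b1 /\ v2 = tPair a2 b2 /\
      Vrel d1 d2 rho t1 a1 a2 /\ Vrel d1 d2 rho t2 b1 b2
  | TArr t1 t2 => fun v1 v2 => is_value v1 /\ is_value v2 /\
      forall w1 w2, Vrel d1 d2 rho t1 w1 w2 ->
        Erel d1 d2 t2 (Vrel d1 d2 rho t2) (tApp v1 w1) (tApp v2 w2)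
  end.

Definition Erel_full d1 d2 rho t := Erel d1 d2 t (Vrel d1 d2 rho t).

Definition tmsubst := var -> option tm.
Definition respects (g : tmsubst) (G : ctx) : Prop :=
  (forall x, g x = None <-> G x = None) /\
  (forall x v t, g x = Some v -> G x = Some t -> typed v t).

Definition Vctx (d1 d2 : tysubst) (rho : tyvar -> rel) (G : ctx)
    (g1 g2 : tmsubst) : Prop :=
  respects g1 (ctx_subst d1 G) /\ respects g2 (ctx_subst d2 G) /\
  forall x t, G x = Some t ->
    exists v1 v2, g1 x = Some v1 /\ g2 x = Some v2 /\ Vrel d1 d2 rho t v1 v2.

(* V_P : finite set (list) of confidential inputs;
   F_P x = Some (tau_f, f) : declassification function f : int -> tau_f. *)
Record policy : Type := Policy {
  pV : list nat;
  pF : nat -> option (ty * tm)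
}.

Definition wf_policy (P : policy) : Prop :=
  forall x tf f, pF P x = Some (tf, f) ->
    In x (pV P) /\ ty_closed tf /\ typed f (TArr TInt tf) /\
    exists y e, f = tLam y TInt e.

Definition GammaP (P : policy) : ctx :=
  fun v => match v with
  | VIn x => if in_dec Nat.eq_dec x (pV P) then
               match pF P x with
               | None => Some (TVar (AX x))
               | Some _ => Some (TVar (AF x))
               end
             else None
  | VDecl x => match pF P x with
               | Some (tf, _) => Some (TArr (TVar (AF x)) tf)
               | None => None
               end
  end.

Definition deltaP : tysubst := fun _ => TInt.

(** Indistinguishability.  [Igen r t] is I[t] where type variables are
    interpreted by r; I[t_f] for closed t_f uses no type variables. *)
Definition Iev (t : ty) (It : rel) : rel :=
  fun e1 e2 => typed e1 (tsubst deltaP t) /\ typed e2 (tsubst deltaP t) /\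
    exists v1 v2, multistep e1 v1 /\ is_value v1 /\ multistep e2 v2 /\
                  is_value v2 /\ It v1 v2.

Fixpoint Igen (r : tyvar -> rel) (t : ty) : rel :=
  match t with
  | TInt => fun v1 v2 => exists n, v1 = tConst n /\ v2 = tConst n
  | TVar a => r a
  | TProd t1 t2 => fun v1 v2 => exists a1 b1 a2 b2,
      v1 = tPair a1 b1 /\ v2 = tPair a2 b2 /\
      Igen r t1 a1 a2 /\ Igen r t2 b1 b2
  | TArr t1 t2 => fun v1 v2 => is_value v1 /\ is_value v2 /\
      forall w1 w2, Igen r t1 w1 w2 -> Iev t2 (Igen r t2) (tApp v1 w1) (tApp v2 w2)
  end.

(* relation used for closed types (no type variables occur) *)
Definition no_tyvar : tyvar -> rel := fun _ _ _ => False.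

Definition I_tyvar (P : policy) (a : tyvar) : rel :=
  match a with
  | AX x => fun v1 v2 => is_value v1 /\ is_value v2 /\ typed v1 TInt /\ typed v2 TInt
  | AF x => fun v1 v2 => is_value v1 /\ is_value v2 /\ typed v1 TInt /\ typed v2 TInt /\
      match pF P x with
      | Some (tf, f) => Iev tf (Igen no_tyvar tf) (tApp f v1) (tApp f v2)
      | None => False
      end
  end.

Definition I (P : policy) (t : ty) : rel := Igen (I_tyvar P) t.

Definition rhoP (P : policy) : tyvar -> rel := I_tyvar P.

Definition I_policy (P : policy) (g1 g2 : tmsubst) : Prop :=
  respects g1 (ctx_subst deltaP (GammaP P)) /\
  respects g2 (ctx_subst deltaP (GammaP P)) /\
  (forall x tf f, pF P x = Some (tf, f) ->
     g1 (VDecl x) = Some f /\ g2 (VDecl x) = Some f) /\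
  (forall x t, GammaP P (VIn x) = Some t ->
     exists v1 v2, g1 (VIn x) = Some v1 /\ g2 (VIn x) = Some v2 /\ I P t v1 v2).


(* Indistinguishability I[τ] has exactly the clauses of the logical relation
   V[τ] at δ_P with type variables interpreted by ρ_P, so the confidential
   inputs of γ_1, γ_2 are related as required.  Each declassifier x_f is
   mapped to the same value f on both sides, and f is related to itself at
   α_f → τ_f because I[α_f] is defined as "f v_1 and f v_2 are
   indistinguishable at τ_f"; τ_f being closed, that relation does not depend
   on how type variables are interpreted. *)

Lemma Erel_iff (d1 d2 : tysubst) (t : ty) (R R' : rel) :
  (forall v1 v2, R v1 v2 <-> R' v1 v2) ->
  forall e1 e2, Erel d1 d2 t R e1 e2 <-> Erel d1 d2 t R' e1 e2.
Proof.
  intros HR e1 e2; unfold Erel.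
  split; intros (T1 & T2 & v1 & v2 & M1 & V1 & M2 & V2 & Rv);
    repeat split; auto; exists v1, v2; repeat split; auto; apply HR; exact Rv.
Qed.

Lemma Igen_iff_Vrel (r : tyvar -> rel) (t : ty) :
  forall v1 v2, Igen r t v1 v2 <-> Vrel deltaP deltaP r t v1 v2.
Proof.
  induction t as [| a | t1 IH1 t2 IH2 | t1 IH1 t2 IH2]; simpl; intros v1 v2.
  - reflexivity.
  - reflexivity.
  - split; intros (a1 & b1 & a2 & b2 & E1 & E2 & H1 & H2);
      exists a1, b1, a2, b2; repeat split; auto; apply IH1 || apply IH2; auto.
  - split; intros (V1 & V2 & H); refine (conj V1 (conj V2 _));
      intros w1 w2 Hw.
    + apply (Erel_iff _ _ _ _ _ IH2), H, IH1, Hw.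
    + apply (Erel_iff _ _ _ _ _ IH2), H, IH1, Hw.
Qed.

Lemma Igen_closed (r r' : tyvar -> rel) (t : ty) :
  ty_closed t -> forall v1 v2, Igen r t v1 v2 <-> Igen r' t v1 v2.
Proof.
  induction t as [| a | t1 IH1 t2 IH2 | t1 IH1 t2 IH2]; simpl; intros Ht v1 v2.
  - reflexivity.
  - contradiction.
  - destruct Ht as [C1 C2].
    split; intros (a1 & b1 & a2 & b2 & E1 & E2 & H1 & H2);
      exists a1, b1, a2, b2; repeat split; auto;
      (apply (IH1 C1) || apply (IH2 C2)); auto.
  - destruct Ht as [C1 C2].
    split; intros (V1 & V2 & H); refine (conj V1 (conj V2 _));
      intros w1 w2 Hw.
    + apply (Erel_iff _ _ _ _ _ (IH2 C2)), H, (IH1 C1), Hw.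
    + apply (Erel_iff _ _ _ _ _ (IH2 C2)), H, (IH1 C1), Hw.
Qed.

Lemma declassifier_Vrel (P : policy) (x : nat) (tf : ty) (f : tm) :
  wf_policy P -> pF P x = Some (tf, f) ->
  Vrel deltaP deltaP (rhoP P) (TArr (TVar (AF x)) tf) f f.
Proof.
  intros Hwf Hf.
  destruct (Hwf _ _ _ Hf) as (_ & Hclosed & _ & y & e & ->).
  simpl; refine (conj (v_lam _ _ _) (conj (v_lam _ _ _) _)).
  intros w1 w2 Hw; unfold rhoP, I_tyvar in Hw; rewrite Hf in Hw.
  destruct Hw as (_ & _ & _ & _ & Hdecl).
  apply (Erel_iff _ _ _ _ _ (Igen_closed no_tyvar (rhoP P) tf Hclosed)) in Hdecl.
  exact (proj1 (Erel_iff _ _ _ _ _ (Igen_iff_Vrel (rhoP P) tf) _ _) Hdecl).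
Qed.

Theorem lemma4 (P : policy) (g1 g2 : tmsubst) :
  wf_policy P ->
  I_policy P g1 g2 ->
  Vctx deltaP deltaP (rhoP P) (GammaP P) g1 g2.
Proof.
  intros Hwf (R1 & R2 & Hdecl & Hin).
  split; [exact R1|]. split; [exact R2|].
  intros [x|x] t Ht.
  - destruct (Hin x t Ht) as (v1 & v2 & E1 & E2 & HI).
    exists v1, v2; split; [exact E1|]; split; [exact E2|].
    apply Igen_iff_Vrel, HI.
  - simpl in Ht; destruct (pF P x) as [[tf f]|] eqn:Hf; [|discriminate].
    injection Ht as <-.
    destruct (Hdecl _ _ _ Hf) as [E1 E2].
    exists f, f; split; [exact E1|]; split; [exact E2|].
    exact (declassifier_Vrel _ _ _ _ Hwf Hf).
Qed.
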